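(* Let $(S,\le)$ be a dcwo, $g:S\rightharpoonup S$ a partial monotonic map, and $s\in S$. Let $G$ be the family of all elements $g^n(s)$, for those $n\in\mathbb N$ such that $g^n(s)$ is defined. Then there are finitely many directed subfamilies $G_0,G_1,\dots,G_{m-1}$ of $G$ such that: (1) $cl(G)=\bigcup_{j=0}^{m-1}cl(G_j)=\downarrow\{\bigvee G_0,\bigvee G_1,\dots,\bigvee G_{m-1}\}$; (2) each $G_j$ is either a one-element set $\{g^{p_j}(s)\}$ with $p_j\in\mathbb N$, or a chain of the form $\{g^{p_j+\ell q_j}(s)\mid \ell\in\mathbb N\}$ where $p_j\in\mathbb N$, $q_j\in\mathbb N\setminus\{0\}$ and $g^{p_j}(s)<g^{p_j+q_j}(s)$; (3) for every $j$ with $0\le j<m$, $s\not< g^{p_j}(s)$.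
   Context: A dcwo is a partial order which is well (well-founded, no infinite antichain) and a dcpo (every directed subset $D$ has a least upper bound $\bigvee D$). A partial monotonic map has an upward-closed domain and is monotone on its domain. $cl$ denotes closure in the Scott topology (open sets: upward-closed sets $U$ meeting every directed set whose lub lies in $U$). *)

From Stdlib Require Import Arith.

Section Order.
Context {S : Type} (le : S -> S -> Prop).

Definition is_partial_order : Prop :=
  (forall x, le x x) /\
  (forall x y, le x y -> le y x -> x = y) /\
  (forall x y z, le x y -> le y z -> le x z).

Definition lt (x y : S) : Prop := le x y /\ x <> y.

Definition is_well_founded_order : Prop := well_founded lt.

Definition no_infinite_antichain : Prop :=
  ~ exists f : nat -> S,
      forall i j, i <> j -> ~ le (f i) (f j).

Definition directed (D : S -> Prop) : Prop :=
  (exists x, D x) /\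
  (forall x y, D x -> D y -> exists z, D z /\ le x z /\ le y z).

Definition is_lub (D : S -> Prop) (u : S) : Prop :=
  (forall x, D x -> le x u) /\
  (forall v, (forall x, D x -> le x v) -> le u v).

Definition is_dcpo : Prop :=
  forall D, directed D -> exists u, is_lub D u.

Definition is_dcwo : Prop :=
  is_partial_order /\ is_well_founded_order /\ no_infinite_antichain /\ is_dcpo.

Definition partial_monotonic (dom : S -> Prop) (g : S -> S) : Prop :=
  (forall x y, dom x -> le x y -> dom y) /\
  (forall x y, dom x -> le x y -> le (g x) (g y)).

Definition upward_closed (U : S -> Prop) : Prop :=
  forall x y, U x -> le x y -> U y.

Definition scott_open (U : S -> Prop) : Prop :=
  upward_closed U /\
  (forall D u, directed D -> is_lub D u -> U u -> exists x, D x /\ U x).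

Definition scott_closed (C : S -> Prop) : Prop :=
  scott_open (fun x => ~ C x).

Definition cl (A : S -> Prop) : S -> Prop :=
  fun x => forall C, scott_closed C -> (forall y, A y -> C y) -> C x.

End Order.

Definition iterate {S : Type} (g : S -> S) (n : nat) (s : S) : S :=
  Nat.iter n g s.

Fixpoint iter_defined {S : Type} (dom : S -> Prop) (g : S -> S) (s : S)
  (n : nat) : Prop :=
  match n with
  | 0 => True
  | S k => iter_defined dom g s k /\ dom (iterate g k s)
  end.

Definition orbit {S : Type} (dom : S -> Prop) (g : S -> S) (s : S) : S -> Prop :=
  fun x => exists n, iter_defined dom g s n /\ x = iterate g n s.

(** If some defined iterate lies strictly above [s], take the least such
    index [p]: monotonicity propagates [s <= g^p(s)] along the whole orbit,
    which is therefore total and splits into [p] monotone chains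
    [g^(j + l p)(s)].  Otherwise either the orbit is finite, and its points
    are the components, or it is total; in the latter case the order being
    well gives [i < j] with [g^i(s) <= g^j(s)], because a reverse inequality
    would produce, by monotonicity, an infinite descending chain, and no
    comparability at all an infinite antichain.  From [i] on the orbit again
    splits into [j - i] monotone chains, each of which is either strictly
    increasing or constant.  In every case the Scott closure of the orbit is
    the finite union of the down-sets of the lubs of the components, since
    such a finite union is Scott closed and each down-set is the closure of
    its directed component. *)

From Stdlib Require Import Arith Lia Classical ClassicalEpsilon Wf_nat.

Lemma well_founded_no_descending_chain {T : Type} (R : T -> T -> Prop)
  (f : nat -> T) : well_founded R -> ~ (forall m, R (f (S m)) (f m)).
Proof.
  intros Hwf Hf.
  enough (Hacc : forall x, Acc R x -> forall m, f m <> x)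
    by exact (Hacc (f 0) (Hwf _) 0 eq_refl).
  intros x Hx. induction Hx as [x _ IH]. intros m <-.
  exact (IH (f (S m)) (Hf m) (S m) eq_refl).
Qed.

Lemma least_nat_witness (P : nat -> Prop) :
  (exists n, P n) -> exists n, P n /\ forall k, k < n -> ~ P k.
Proof.
  intros HP.
  destruct (dec_inh_nat_subset_has_unique_least_element P (fun n => classic (P n)) HP)
    as [n [[Pn Hleast] _]].
  exists n. split; [exact Pn|]. intros k Hk Pk. specialize (Hleast k Pk). lia.
Qed.

Section ScottClosure.

Variables (T : Type) (le : T -> T -> Prop).
Hypothesis Hpo : is_partial_order le.

Lemma cl_mono (A B : T -> Prop) :
  (forall x, A x -> B x) -> forall x, cl le A x -> cl le B x.
Proof. intros HAB x Hx C HC HBC. apply Hx; auto. Qed.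

Lemma directed_avoid_finite (D : T -> Prop) (b : nat -> T) (n : nat) :
  directed le D ->
  (forall j, j < n -> exists x, D x /\ ~ le x (b j)) ->
  exists z, D z /\ forall j, j < n -> ~ le z (b j).
Proof.
  destruct Hpo as (_ & _ & Htrans). intros [[x0 Hx0] Hdir].
  induction n as [|n IH]; intros Havoid.
  - exists x0. split; [exact Hx0 | intros j Hj; lia].
  - destruct IH as [z [Hz Hzb]]; [intros j Hj; apply Havoid; lia|].
    destruct (Havoid n (Nat.lt_succ_diag_r n)) as [x [Hx Hxb]].
    destruct (Hdir z x Hz Hx) as [w [Hw [Hzw Hxw]]].
    exists w. split; [exact Hw|]. intros j Hj Hwb.
    destruct (Nat.eq_dec j n) as [->|Hjn].
    + exact (Hxb (Htrans _ _ _ Hxw Hwb)).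
    + exact (Hzb j ltac:(lia) (Htrans _ _ _ Hzw Hwb)).
Qed.

Lemma scott_closed_finite_downset (m : nat) (b : nat -> T) :
  scott_closed le (fun x => exists j, j < m /\ le x (b j)).
Proof.
  pose proof Hpo as (_ & _ & Htrans). split.
  - intros x y Hx Hxy [j [Hj Hyb]]. apply Hx. exists j. eauto.
  - intros D u Hdir [Hub Hleast] Hu. apply NNPP. intros Hinside.
    assert (HD : forall x, D x -> exists j, j < m /\ le x (b j)).
    { intros x Hx. apply NNPP. intros Hx'. apply Hinside. eauto. }
    destruct (directed_avoid_finite D b m Hdir) as [z [Hz Hzb]].
    + intros j Hj. apply NNPP. intros Hbelow. apply Hu. exists j. split; [exact Hj|].
      apply Hleast. intros x Hx. apply NNPP. intros Hxb. apply Hbelow. eauto.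
    + destruct (HD z Hz) as [j [Hj Hzj]]. exact (Hzb j Hj Hzj).
Qed.

Lemma cl_directed_lub (D : T -> Prop) (b : T) :
  directed le D -> is_lub le D b -> forall x, cl le D x <-> le x b.
Proof.
  intros Hdir [Hub Hleast] x. split.
  - intros Hx.
    destruct (Hx _ (scott_closed_finite_downset 1 (fun _ => b))) as [_ [_ Hxb]];
      [|exact Hxb].
    intros y Hy. exists 0. split; [lia | exact (Hub y Hy)].
  - intros Hxb C [Hup Hopen] HDC. apply NNPP. intros HCx.
    destruct (Hopen D b Hdir (conj Hub Hleast) (Hup x b HCx Hxb)) as [y [Hy HCy]].
    exact (HCy (HDC y Hy)).
Qed.

Lemma cl_finite_directed_cover (O : T -> Prop) (m : nat)
  (Gs : nat -> T -> Prop) (b : nat -> T) :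
  (forall j, j < m ->
     directed le (Gs j) /\ is_lub le (Gs j) (b j) /\ (forall x, Gs j x -> O x)) ->
  (forall x, O x -> exists j, j < m /\ Gs j x) ->
  forall x, (cl le O x <-> exists j, j < m /\ cl le (Gs j) x) /\
            (cl le O x <-> exists j, j < m /\ le x (b j)).
Proof.
  intros HGs Hcover.
  assert (Hcl_Gs : forall j x, j < m -> cl le (Gs j) x <-> le x (b j)).
  { intros j x Hj. destruct (HGs j Hj) as (Hdir & Hlub & _).
    exact (cl_directed_lub _ _ Hdir Hlub x). }
  assert (Hcl_O : forall x, cl le O x <-> exists j, j < m /\ le x (b j)).
  { intros x. split.
    - intros Hx. apply (Hx _ (scott_closed_finite_downset m b)).
      intros y Hy. destruct (Hcover y Hy) as [j [Hj HGy]].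
      destruct (HGs j Hj) as (_ & [Hub _] & _). eauto.
    - intros [j [Hj Hxb]]. destruct (HGs j Hj) as (_ & _ & HGO).
      exact (cl_mono _ _ HGO x (proj2 (Hcl_Gs j x Hj) Hxb)). }
  intros x. rewrite Hcl_O. split; [|reflexivity].
  split; intros [j [Hj Hx]]; exists j; (split; [exact Hj|]);
    [rewrite Hcl_Gs | rewrite <- Hcl_Gs]; assumption.
Qed.

End ScottClosure.

Section Iterates.

Variables (T : Type) (dom : T -> Prop) (g : T -> T) (s : T).

Lemma iterate_add n m : iterate g (n + m) s = iterate g n (iterate g m s).
Proof. apply Nat.iter_add. Qed.

Lemma iterate_periodic j q :
  iterate g (j + q) s = iterate g j s -> forall l, iterate g (j + l * q) s = iterate g j s.
Proof.
  intros Hper l. induction l as [|l IH]; [f_equal; lia|].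
  replace (j + S l * q) with (l * q + (j + q)) by lia.
  rewrite iterate_add, Hper, <- iterate_add.
  replace (l * q + j) with (j + l * q) by lia. exact IH.
Qed.

Lemma iter_defined_iff n :
  iter_defined dom g s n <-> forall k, k < n -> dom (iterate g k s).
Proof.
  induction n as [|n IH]; simpl.
  - split; [intros _ k Hk; lia | auto].
  - rewrite IH. split.
    + intros [Hbelow Hn] k Hk.
      destruct (Nat.eq_dec k n) as [->|Hkn]; [exact Hn | apply Hbelow; lia].
    + intros H. split; [intros k Hk|]; apply H; lia.
Qed.

Lemma iter_defined_le n k :
  iter_defined dom g s n -> k <= n -> iter_defined dom g s k.
Proof. rewrite !iter_defined_iff. intros H Hkn j Hj. apply H. lia. Qed.

Lemma iter_defined_total :
  (forall k, dom (iterate g k s)) -> forall n, iter_defined dom g s n.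
Proof. intros Hall n. apply iter_defined_iff. auto. Qed.

Lemma dom_iterate_of_total :
  (forall n, iter_defined dom g s n) -> forall k, dom (iterate g k s).
Proof. intros Htotal k. exact (proj2 (Htotal (S k))). Qed.

Lemma iter_defined_bounded :
  ~ (forall n, iter_defined dom g s n) ->
  exists N, forall n, iter_defined dom g s n <-> n <= N.
Proof.
  intros Hpartial. apply not_all_ex_not in Hpartial.
  destruct (least_nat_witness _ Hpartial) as [[|N] [HN Hleast]];
    [exfalso; exact (HN I)|].
  exists N. intros n. split.
  - intros Hn. apply Nat.nlt_ge. intros HNn. exact (HN (iter_defined_le n (S N) Hn HNn)).
  - intros HnN. apply NNPP. apply Hleast. lia.
Qed.

End Iterates.

Section Orbit.

Variables (T : Type) (le : T -> T -> Prop) (dom : T -> Prop) (g : T -> T) (s : T).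
Hypothesis Hpo : is_partial_order le.
Hypothesis Hpm : partial_monotonic le dom g.

Lemma le_monotone_sequence (f : nat -> T) :
  (forall l, le (f l) (f (S l))) -> forall l l', l <= l' -> le (f l) (f l').
Proof.
  destruct Hpo as (Hrefl & _ & Htrans). intros Hstep l l' Hll'.
  induction Hll' as [|l' _ IH]; [apply Hrefl | exact (Htrans _ _ _ IH (Hstep l'))].
Qed.

Lemma iterate_le_shift i j :
  (forall k, dom (iterate g k s)) ->
  le (iterate g i s) (iterate g j s) ->
  forall t, le (iterate g (i + t) s) (iterate g (j + t) s).
Proof.
  intros Hall Hij t. induction t as [|t IH].
  - rewrite !Nat.add_0_r. exact Hij.
  - rewrite !Nat.add_succ_r. exact (proj2 Hpm _ _ (Hall _) IH).
Qed.

Lemma iterates_total_of_le_iterate p :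
  0 < p -> iter_defined dom g s p -> le s (iterate g p s) ->
  forall k, dom (iterate g k s).
Proof.
  intros Hp Hdef Hsp.
  enough (H : forall k, dom (iterate g k s) /\ le (iterate g k s) (iterate g (k + p) s))
    by (intros k; apply H).
  intros k. induction k as [k IH] using lt_wf_ind. split.
  - destruct (Nat.lt_ge_cases k p) as [Hkp|Hpk].
    + exact (proj1 (iter_defined_iff _ _ _ _ _) Hdef k Hkp).
    + destruct (IH (k - p) ltac:(lia)) as [Hdom Hle].
      replace (k - p + p) with k in Hle by lia.
      exact (proj1 Hpm _ _ Hdom Hle).
  - destruct k as [|k]; [exact Hsp|].
    destruct (IH k ltac:(lia)) as [Hdom Hle]. exact (proj2 Hpm _ _ Hdom Hle).
Qed.

Lemma orbit_good_pair :
  well_founded (lt le) -> no_infinite_antichain le ->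
  (forall k, dom (iterate g k s)) ->
  exists i j, i < j /\ le (iterate g i s) (iterate g j s).
Proof.
  intros Hwf Hwqo Hall. apply NNPP. intros Hbad.
  destruct (classic (exists i j, i < j /\ le (iterate g j s) (iterate g i s)))
    as [[i [j [Hij Hji]]]|Hnodesc].
  - apply (well_founded_no_descending_chain _ (fun n => iterate g (i + n * (j - i)) s) Hwf).
    intros n. split.
    + pose proof (iterate_le_shift j i Hall Hji (n * (j - i))) as H.
      replace (j + n * (j - i)) with (i + S n * (j - i)) in H by lia. exact H.
    + intros Heq. apply Hbad. exists (i + n * (j - i)), (i + S n * (j - i)).
      split; [lia|]. rewrite Heq. apply Hpo.
  - apply Hwqo. exists (fun n => iterate g n s). intros i j Hij Hle.
    destruct (Nat.lt_gt_cases i j) as [[Hlt|Hgt] _]; [exact Hij|..].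
    + apply Hbad. eauto.
    + apply Hnodesc. eauto.
Qed.

Definition orbit_decomposition : Prop :=
  exists (m : nat) (Gs : nat -> T -> Prop) (p q : nat -> nat) (b : nat -> T),
    (forall j, j < m ->
       (forall x, Gs j x -> orbit dom g s x) /\
       directed le (Gs j) /\
       is_lub le (Gs j) (b j) /\
       ((iter_defined dom g s (p j) /\
         (forall x, Gs j x <-> x = iterate g (p j) s))
        \/
        (0 < q j /\
         (forall l, iter_defined dom g s (p j + l * q j)) /\
         (forall x, Gs j x <-> exists l, x = iterate g (p j + l * q j) s) /\
         lt le (iterate g (p j) s) (iterate g (p j + q j) s))) /\
       ~ lt le s (iterate g (p j) s)) /\
    (forall x,
       (cl le (orbit dom g s) x <-> exists j, j < m /\ cl le (Gs j) x) /\
       (cl le (orbit dom g s) x <-> exists j, j < m /\ le x (b j))).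

(* The components are indexed by their first points [j < m]: the chain
   [g^(j + l q)(s)] when [chain j] holds, the singleton [g^j(s)] otherwise. *)
Definition component (chain : nat -> Prop) (q j : nat) (x : T) : Prop :=
  (chain j /\ exists l, x = iterate g (j + l * q) s) \/
  (~ chain j /\ x = iterate g j s).

Lemma decomposition_of_index_cover (m q : nat) (chain : nat -> Prop) :
  is_dcpo le ->
  (forall j, j < m -> iter_defined dom g s j /\ ~ lt le s (iterate g j s)) ->
  (forall j, j < m -> chain j ->
     0 < q /\ (forall l, iter_defined dom g s (j + l * q)) /\
     lt le (iterate g j s) (iterate g (j + q) s) /\
     (forall l, le (iterate g (j + l * q) s) (iterate g (j + S l * q) s))) ->
  (forall n, iter_defined dom g s n -> exists j, j < m /\ component chain q j (iterate g n s)) ->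
  orbit_decomposition.
Proof.
  intros Hdcpo Hstart Hchain Hcover.
  set (Gs := component chain q).
  assert (Hdir : forall j, j < m -> directed le (Gs j)).
  { intros j Hj. destruct (classic (chain j)) as [Hc|Hc]; split.
    - exists (iterate g j s). left. split; [exact Hc|]. exists 0. f_equal; lia.
    - destruct (Hchain j Hj Hc) as (_ & _ & _ & Hstep).
      pose proof (le_monotone_sequence _ Hstep) as Hmono.
      intros x y [[_ [l1 ->]]|[Hn _]] [[_ [l2 ->]]|[Hn' _]]; try contradiction.
      exists (iterate g (j + Nat.max l1 l2 * q) s).
      split; [left; split; [exact Hc | eauto]|].
      split; apply Hmono; lia.
    - exists (iterate g j s). right. auto.
    - intros x y [[Hn _]|[_ ->]] [[Hn' _]|[_ ->]]; try contradiction.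
      exists (iterate g j s). split; [right; auto|]. split; apply Hpo. }
  destruct (choice (fun j u => j < m -> is_lub le (Gs j) u)) as [b Hlub].
  { intros j. destruct (Nat.lt_ge_cases j m) as [Hj|Hj].
    - destruct (Hdcpo _ (Hdir j Hj)) as [u Hu]. eauto.
    - exists s. lia. }
  assert (Hsub : forall j, j < m -> forall x, Gs j x -> orbit dom g s x).
  { intros j Hj x [[Hc [l ->]]|[_ ->]].
    - destruct (Hchain j Hj Hc) as (_ & Hdef & _). exists (j + l * q). auto.
    - exists j. split; [apply Hstart|]; auto. }
  exists m, Gs, (fun j => j), (fun _ => q), b. split.
  - intros j Hj. split; [exact (Hsub j Hj)|]. split; [exact (Hdir j Hj)|].
    split; [exact (Hlub j Hj)|]. split; [|apply Hstart; exact Hj].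
    destruct (classic (chain j)) as [Hc|Hc].
    + destruct (Hchain j Hj Hc) as (Hq & Hdef & Hlt & _). right.
      split; [exact Hq|]. split; [exact Hdef|]. split; [|exact Hlt].
      intros x. unfold Gs, component. tauto.
    + left. split; [apply Hstart; exact Hj|]. intros x. unfold Gs, component. tauto.
  - apply (cl_finite_directed_cover _ _ Hpo).
    + intros j Hj. split; [exact (Hdir j Hj)|]. split; [exact (Hlub j Hj) | exact (Hsub j Hj)].
    + intros x [n [Hn ->]]. exact (Hcover n Hn).
Qed.

(* From [i] on, [g^j(s) <= g^(j+q)(s)], so the residues [i <= j < i + q] of
   the indices modulo [q] give chains, constant exactly when
   [g^j(s) = g^(j+q)(s)]. *)
Lemma decomposition_eventually_increasing i q :
  is_dcpo le -> (forall k, dom (iterate g k s)) -> 0 < q ->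
  le (iterate g i s) (iterate g (i + q) s) ->
  (forall k, k < i + q -> ~ lt le s (iterate g k s)) ->
  orbit_decomposition.
Proof.
  intros Hdcpo Hall Hq Hiq Hns.
  assert (Hstep : forall k, i <= k -> le (iterate g k s) (iterate g (k + q) s)).
  { intros k Hik. pose proof (iterate_le_shift i (i + q) Hall Hiq (k - i)) as H.
    replace (i + (k - i)) with k in H by lia.
    replace (i + q + (k - i)) with (k + q) in H by lia. exact H. }
  apply (decomposition_of_index_cover (i + q) q
           (fun j => i <= j /\ iterate g j s <> iterate g (j + q) s) Hdcpo).
  - intros j Hj. split; [apply iter_defined_total, Hall | apply Hns, Hj].
  - intros j Hj [Hij Hne]. split; [exact Hq|]. split; [intros l; apply iter_defined_total, Hall|].
    split; [split; [apply Hstep|]; assumption|].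
    intros l. replace (j + S l * q) with (j + l * q + q) by lia. apply Hstep. lia.
  - intros n _. destruct (Nat.lt_ge_cases n i) as [Hni|Hin].
    { exists n. split; [lia|]. right. split; [intros [H _]; lia | reflexivity]. }
    set (r := (n - i) mod q). set (l := (n - i) / q).
    assert (Hr : r < q) by (apply Nat.mod_upper_bound; lia).
    assert (Hn : n = i + r + l * q).
    { pose proof (Nat.div_mod (n - i) q ltac:(lia)). unfold r, l. lia. }
    exists (i + r). split; [lia|]. rewrite Hn.
    destruct (classic (iterate g (i + r) s = iterate g (i + r + q) s)) as [Hper|Hne].
    + right. split; [intros [_ H]; contradiction|].
      apply iterate_periodic. symmetry. exact Hper.
    + left. split; [split; [lia | exact Hne] | eauto].
Qed.

Lemma decomposition_of_lt_iterate p :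
  is_dcpo le -> iter_defined dom g s p -> lt le s (iterate g p s) ->
  (forall k, k < p -> iter_defined dom g s k -> ~ lt le s (iterate g k s)) ->
  orbit_decomposition.
Proof.
  intros Hdcpo Hp [Hsp Hne] Hleast.
  assert (Hp0 : 0 < p) by (destruct p; [contradiction (Hne eq_refl) | lia]).
  pose proof (iterates_total_of_le_iterate p Hp0 Hp Hsp) as Hall.
  apply (decomposition_eventually_increasing 0 p Hdcpo Hall Hp0 Hsp).
  intros k Hk. apply Hleast; [exact Hk | apply iter_defined_total, Hall].
Qed.

Lemma decomposition_total_orbit :
  is_dcwo le -> (forall k, dom (iterate g k s)) ->
  (forall k, ~ lt le s (iterate g k s)) ->
  orbit_decomposition.
Proof.
  intros (_ & Hwf & Hwqo & Hdcpo) Hall Hns.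
  destruct (orbit_good_pair Hwf Hwqo Hall) as [i [j [Hij Hle]]].
  apply (decomposition_eventually_increasing i (j - i) Hdcpo Hall); [lia | | auto].
  replace (i + (j - i)) with j by lia. exact Hle.
Qed.

Lemma decomposition_finite_orbit N :
  is_dcpo le -> (forall n, iter_defined dom g s n <-> n <= N) ->
  (forall k, iter_defined dom g s k -> ~ lt le s (iterate g k s)) ->
  orbit_decomposition.
Proof.
  intros Hdcpo Hdef Hns.
  apply (decomposition_of_index_cover (S N) 0 (fun _ => False) Hdcpo).
  - intros j Hj. assert (Hjdef : iter_defined dom g s j) by (apply Hdef; lia). auto.
  - intros j _ [].
  - intros n Hn. exists n. split; [apply Hdef in Hn; lia|]. right. auto.
Qed.

End Orbit.

Theorem lemma5p19 (S : Type) (le : S -> S -> Prop) (dom : S -> Prop)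
  (g : S -> S) (s : S) :
  is_dcwo le ->
  partial_monotonic le dom g ->
  exists (m : nat) (Gs : nat -> S -> Prop) (p q : nat -> nat) (b : nat -> S),
    (forall j, j < m ->
       (forall x, Gs j x -> orbit dom g s x) /\
       directed le (Gs j) /\
       is_lub le (Gs j) (b j) /\
       ((iter_defined dom g s (p j) /\
         (forall x, Gs j x <-> x = iterate g (p j) s))
        \/
        (0 < q j /\
         (forall l, iter_defined dom g s (p j + l * q j)) /\
         (forall x, Gs j x <-> exists l, x = iterate g (p j + l * q j) s) /\
         lt le (iterate g (p j) s) (iterate g (p j + q j) s))) /\
       ~ lt le s (iterate g (p j) s)) /\
    (forall x,
       (cl le (orbit dom g s) x <-> exists j, j < m /\ cl le (Gs j) x) /\
       (cl le (orbit dom g s) x <-> exists j, j < m /\ le x (b j))).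
Proof.
  intros Hdcwo Hpm. pose proof Hdcwo as (Hpo & _ & _ & Hdcpo).
  change (orbit_decomposition S le dom g s).
  destruct (classic (exists p, iter_defined dom g s p /\ lt le s (iterate g p s)))
    as [Habove|Hnone].
  - destruct (least_nat_witness _ Habove) as [p [[Hp Hsp] Hleast]].
    apply (decomposition_of_lt_iterate _ _ _ _ _ Hpo Hpm p Hdcpo Hp Hsp).
    intros k Hk Hkdef Hsk. exact (Hleast k Hk (conj Hkdef Hsk)).
  - assert (Hns : forall k, iter_defined dom g s k -> ~ lt le s (iterate g k s))
      by (intros k Hk Hsk; apply Hnone; eauto).
    destruct (classic (forall n, iter_defined dom g s n)) as [Htotal|Hpartial].
    + apply (decomposition_total_orbit _ _ _ _ _ Hpo Hpm Hdcwo).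
      * exact (dom_iterate_of_total _ _ _ _ Htotal).
      * intros k. apply Hns, Htotal.
    + destruct (iter_defined_bounded _ _ _ _ Hpartial) as [N HN].
      exact (decomposition_finite_orbit _ _ _ _ _ Hpo N Hdcpo HN Hns).
Qed.
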